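(* Let $\mathcal{X} \subseteq \mathbb{R}^m$ be countable, let $\Theta = \{\theta_1,\dots,\theta_C\}$ with $C \ge 2$, let $p(\cdot\mid\theta_i)$, $i \in [C]$, be probability mass functions on $\mathcal{X}$, let $\pi = (\pi_1,\dots,\pi_C)$ be a prior probability vector, let $\mathcal{Q}$ be a subset of the $C$-dimensional probability simplex, and fix an observation $x \in \mathcal{X}$. Suppose that for every $i \in [C]$ we have $N_i$ i.i.d. samples $\widehat x_{ij}$, $j \in [N_i]$, from $p(\cdot\mid\theta_i)$, and let $\widehat\nu_i^{N_i} = N_i^{-1}\sum_{j=1}^{N_i} \delta_{\widehat x_{ij}}$ be the empirical distribution. For $\varepsilon_i > 0$ let $\mathbb{B}_i^{N_i} = \mathbb{B}_{\mathrm{KL}}(\widehat\nu_i^{N_i},\varepsilon_i) = \{\nu \in \mathcal{M}(\mathcal{X}) : \mathrm{KL}(\widehat\nu_i^{N_i}\parallel\nu) \le \varepsilon_i\}$. Define $$\mathcal{J}^{\mathrm{true}} = \min_{q \in \mathcal{Q}} \sum_{i=1}^C q_i(\log q_i - \log\pi_i) - \sum_{i=1}^C q_i \log p(x\mid\theta_i),$$ $$\widehat{\mathcal{J}}_{\mathbb{B}^N} = \min_{q \in \mathcal{Q}} \sum_{i=1}^C q_i(\log q_i - \log\pi_i) - \sum_{i=1}^C q_i \log\Big(\sup_{\nu_i \in \mathbb{B}_i^{N_i}} \nu_i(x)\Big),$$ and set $n = \min\{N_1,\dots,N_C\}$. Then $$\limsup_{n\to\infty} \frac1n \log \mathbb{P}^\infty\big(\mathcal{J}^{\mathrm{true}}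 < \widehat{\mathcal{J}}_{\mathbb{B}^N}\big) \le -\min_{i \in [C]} \varepsilon_i < 0.$$
   Context: $\mathcal{M}(\mathcal{X})$ is the set of probability mass functions on $\mathcal{X}$; $\delta_z$ is the Dirac measure at $z$; $[C] = \{1,\dots,C\}$. For $\nu_1 \ll \nu_2$, $\mathrm{KL}(\nu_1\parallel\nu_2) = \sum_{z\in\mathcal{X}} f(\nu_1(z)/\nu_2(z))\nu_2(z)$ with $f(t) = t\log t - t + 1$. $\mathbb{P}^\infty$ denotes the probability with respect to the (infinite) i.i.d. sampling of the training data. *)

From HB Require Import structures.
From mathcomp Require Import all_boot all_order all_algebra.
From mathcomp Require Import all_classical all_reals all_analysis.
Set Implicit Arguments. Unset Strict Implicit. Unset Printing Implicit Defensive.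
Import Order.TTheory GRing.Theory Num.Theory.
Local Open Scope classical_set_scope.
Local Open Scope ring_scope.

Section Defs.
Variables (R : realType) (m : nat).
Local Notation V := 'rV[R]_m.

Definition is_pmf (X : set V) (nu : V -> R) : Prop :=
  (forall z, 0 <= nu z) /\ (forall z, ~ X z -> nu z = 0) /\
  (\esum_(z in X) (nu z)%:E = 1%E).

Definition fKL (t : R) : R := t * ln t - t + 1.

Definition KL (X : set V) (nu1 nu2 : V -> R) : \bar R :=
  if `[< forall z, X z -> nu2 z = 0 -> nu1 z = 0 >]
  then \esum_(z in X) (fKL (nu1 z / nu2 z) * nu2 z)%:E
  else +oo%E.

Definition KLball (X : set V) (nuh : V -> R) (eps : R) : set (V -> R) :=
  [set nu | is_pmf X nu /\ (KL X nuh nu <= eps%:E)%E].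

Definition empirical (s : seq V) : V -> R :=
  fun z => (count (pred1 z) s)%:R / (size s)%:R.

(* objective sum_i q_i (log q_i - log pi_i) - sum_i q_i log L_i, in \bar R,
   with conventions 0 log 0 = 0, log 0 = -oo and 0 * (-oo) = 0 *)
Definition objective (C : nat) (pi : 'I_C -> R) (L : 'I_C -> \bar R)
  (q : 'I_C -> R) : \bar R :=
  (\sum_(i < C) ((q i * ln (q i))%:E - (q i)%:E * lne (pi i)%:E)
   - \sum_(i < C) (q i)%:E * lne (L i))%E.

Definition Jtrue (C : nat) (Q : set ('I_C -> R)) (pi : 'I_C -> R)
  (p : 'I_C -> V -> R) (x : V) : \bar R :=
  ereal_inf [set objective pi (fun i => (p i x)%:E) q | q in Q].

Definition Jhat (X : set V) (C : nat) (Q : set ('I_C -> R)) (pi : 'I_C -> R)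
  (eps : 'I_C -> R) (s : {ffun 'I_C -> seq V}) (x : V) : \bar R :=
  ereal_inf [set objective pi
    (fun i => ereal_sup [set (nu x)%:E | nu in KLball X (empirical (s i)) (eps i)]) q
    | q in Q].

Definition samples (X : set V) (C : nat) (N : 'I_C -> nat) :
  set {ffun 'I_C -> seq V} :=
  [set s | forall i, size (s i) = N i /\ (forall y, y \in s i -> X y)].

Definition sample_prob (X : set V) (C : nat) (p : 'I_C -> V -> R)
  (N : 'I_C -> nat) (E : set {ffun 'I_C -> seq V}) : \bar R :=
  \esum_(s in samples X N `&` E) (\prod_(i < C) \prod_(y <- s i) p i y)%:E.

End Defs.

(* min of N_1..N_C (the identity \max_i N i makes this the true minimum
   whenever C >= 1) *)
Definition nmin (C : nat) (N : 'I_C -> nat) : nat :=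
  (\big[minn/(\max_(i < C) N i)%N]_(i < C) N i)%N.

(* If every true likelihood p_i(x) is at most the robust one sup_{nu in B_i} nu(x), the
   robust objective lies pointwise below the true one, so Jhat <= Jtrue.  Tilting the
   empirical measure so that it gives mass b to x (and rescaling the rest) stays inside the
   KL ball as long as the binary divergence kl(a_i, b) is at most eps_i, where a_i is the
   empirical frequency of x.  Hence Jtrue < Jhat forces, for some class i, a_i < p_i(x) and
   kl(a_i, p_i(x)) > eps_i; by the Chernoff bound each such value of a_i has probability at
   most exp(-N_i eps_i).  A union bound over the N_i + 1 possible frequencies and the C
   classes gives P <= sum_i (N_i + 1) exp(-N_i eps_i), whose exponential rate in
   n = min_i N_i is at most -min_i eps_i. *)

Set Warnings "-notation-overridden,-ambiguous-paths,-notation-incompatible-prefix".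
From HB Require Import structures.
From mathcomp Require Import all_boot all_order all_algebra.
From mathcomp Require Import all_classical all_reals all_analysis.
From mathcomp Require Import lra ring.
Import Order.TTheory GRing.Theory Num.Theory.
Local Open Scope classical_set_scope.
Local Open Scope ring_scope.

Section RealFacts.
Context {R : realType}.
Implicit Types (a b t v w : R).

Lemma fKL_ge0 t : 0 <= t -> 0 <= fKL t.
Proof.
rewrite /fKL le_eqVlt => /predU1P[<-|t0]; first by rewrite mul0r subr0 add0r.
have ti : 0 < t^-1 by rewrite invr_gt0.
have h : ln (t^-1) <= t^-1 - 1.
  by have := @le_ln1Dx R (t^-1 - 1); rewrite [1 + _]addrC subrK; apply; lra.
rewrite lnV ?posrE // in h.
have tt : t * t^-1 = 1 by rewrite mulfV // gt_eqF.
nra.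
Qed.

Lemma fKL_divrM w v : v != 0 -> fKL (w / v) * v = w * ln (w / v) - w + v.
Proof.
move=> v0; rewrite /fKL; set t := w / v.
have -> : w = t * v by rewrite /t divfK.
ring.
Qed.

Definition binKL a b := a * ln (a / b) + (1 - a) * ln ((1 - a) / (1 - b)).

Lemma binKLxx a : binKL a a = 0.
Proof.
rewrite /binKL; have [->|a0] := eqVneq a 0.
  by rewrite !mul0r subr0 divff ?oner_eq0 // ln1 mulr0 addr0.
have [->|a1] := eqVneq (1 - a) 0; first by rewrite mul0r divff // ln1 mulr0 addr0.
by rewrite !divff // ln1 !mulr0 addr0.
Qed.

End RealFacts.

Section FiniteSupport.
Context {R : realType} {T : choiceType}.
Implicit Types (D : set T) (S : seq T) (f : T -> R).

Lemma esum_seq_support D S f :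
  uniq S -> (forall z, z \in S -> D z) ->
  (forall z, D z -> 0 <= f z) -> (forall z, D z -> z \notin S -> f z = 0) ->
  \esum_(z in D) (f z)%:E = (\sum_(z <- S) f z)%:E.
Proof.
move=> uS SD f0 fS.
rewrite (esumID [set` S]); last by move=> z Dz; rewrite lee_fin f0.
rewrite [X in (_ + X)%E]esum1 ?adde0; last first.
  by move=> z [Dz /= zS]; rewrite fS //; apply/negP.
have -> : D `&` [set` S] = [set` S].
  by apply/seteqP; split => [z [] //|z zS]; split => //; apply: SD.
rewrite esum_fset; [|exact: finite_seq|by move=> z; rewrite inE => /SD/f0; rewrite lee_fin].
by rewrite -fsbig_seq // sumEFin.
Qed.

Lemma sum_le_esum D S f :
  uniq S -> (forall z, z \in S -> D z) -> (forall z, D z -> 0 <= f z) ->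
  ((\sum_(z <- S) f z)%:E <= \esum_(z in D) (f z)%:E)%E.
Proof.
move=> uS SD f0; apply: esum_ge; exists [set` S].
  by split; [exact: finite_seq | move=> z /SD].
by rewrite -fsbig_seq // sumEFin.
Qed.

Lemma esum_le_seq D f M :
  (forall S, uniq S -> (forall z, z \in S -> D z) -> \sum_(z <- S) f z <= M) ->
  (\esum_(z in D) (f z)%:E <= M%:E)%E.
Proof.
move=> hM; apply: ge_ereal_sup => _ [A [finA AD] <-].
rewrite fsbig_finite //= sumEFin lee_fin; apply: hM; first exact: finmap.fset_uniq.
by move=> z; rewrite in_fset_set // inE => /AD.
Qed.

End FiniteSupport.

Section Pmf.
Context {R : realType} {m : nat}.
Local Notation V := 'rV[R]_m.
Context {X : set V} {p : V -> R}.
Hypothesis p_pmf : is_pmf X p.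

Lemma pmf_sum_le1 (S : seq V) :
  uniq S -> (forall z, z \in S -> X z) -> \sum_(z <- S) p z <= 1.
Proof.
case: p_pmf => [p0 [_ p1]] uS SX; rewrite -lee_fin -p1.
by apply: sum_le_esum => // z _; exact: p0.
Qed.

Lemma pmf_le1 z : X z -> p z <= 1.
Proof.
move=> Xz; have := @pmf_sum_le1 [:: z] isT.
by rewrite big_seq1; apply=> y; rewrite inE => /eqP ->.
Qed.

End Pmf.

(* When [nu x = 1] the rescaling factor divides by zero, but it then only multiplies
   null masses. *)
Definition tilt {R : realType} {m : nat} (nu : 'rV[R]_m -> R) (x : 'rV[R]_m) (b : R) :
  'rV[R]_m -> R :=
  fun z => if z == x then b else nu z * ((1 - b) / (1 - nu x)).

Section Tilt.
Context {R : realType} {m : nat}.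
Local Notation V := 'rV[R]_m.
Context {X : set V} {nu : V -> R} {S : seq V} {x : V} {b : R}.
Hypotheses (S_uniq : uniq S) (S_X : forall z, z \in S -> X z) (xS : x \in S).
Hypotheses (nu_ge0 : forall z, 0 <= nu z) (nu_supp : forall z, z \notin S -> nu z = 0).
Hypothesis nu_sum : \sum_(z <- S) nu z = 1.
Hypotheses (nux_le : nu x <= b) (b_le1 : b <= 1).

Let sum_neq_x : \sum_(z <- S | z != x) nu z = 1 - nu x.
Proof. by move: nu_sum; rewrite (bigD1_seq x) //= => <-; rewrite addrC addrK. Qed.

Lemma tilt_ge0 z : 0 <= tilt nu x b z.
Proof.
rewrite /tilt; case: eqP => _; first exact: le_trans nux_le.
by rewrite mulr_ge0 // divr_ge0 -?sum_neq_x ?sumr_ge0 // subr_ge0.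
Qed.

Lemma sum_tilt : \sum_(z <- S) tilt nu x b z = 1.
Proof.
rewrite (bigD1_seq x) //= /tilt eqxx.
rewrite (eq_bigr (fun z => nu z * ((1 - b) / (1 - nu x)))); last by move=> z /negbTE ->.
rewrite -big_distrl /= sum_neq_x.
have [a1|a1] := eqVneq (1 - nu x) 0; last by rewrite mulrCA mulfV // mulr1 addrC subrK.
by rewrite a1 mul0r addr0; apply/eqP; rewrite eq_le b_le1; move: a1 nux_le; lra.
Qed.

Lemma tilt_notin z : z \notin S -> tilt nu x b z = 0.
Proof.
move=> zS; rewrite /tilt; case: eqP => [e|_]; first by move: zS; rewrite e xS.
by rewrite nu_supp // mul0r.
Qed.

Lemma tilt_pmf : is_pmf X (tilt nu x b).
Proof.
split; first exact: tilt_ge0.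
split; first by move=> z Xz; apply: tilt_notin; apply/negP => /S_X.
rewrite (esum_seq_support X S _ S_uniq S_X) ?sum_tilt // => [z _|z _]; first exact: tilt_ge0.
exact: tilt_notin.
Qed.

Let nux1_eq0 z : z != x -> nu x = 1 -> nu z = 0.
Proof.
have [zS zx nux1|/nu_supp //] := boolP (z \in S).
move: sum_neq_x; rewrite nux1 subrr => /eqP; rewrite psumr_eq0 // => /allP/(_ z zS).
by rewrite zx => /eqP.
Qed.

Hypothesis b1_nux1 : b = 1 -> nu x = 1.

Lemma tilt_eq0 z : tilt nu x b z = 0 -> nu z = 0.
Proof.
rewrite /tilt; case: eqP => [->|/eqP zx]; first by move=> b0; move: nux_le (nu_ge0 x); lra.
move/eqP; rewrite mulf_eq0 => /orP[/eqP //|].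
by rewrite mulf_eq0 invr_eq0 !subr_eq0 => /orP[/eqP/esym/b1_nux1|/eqP/esym]; exact: nux1_eq0.
Qed.

Lemma KL_tilt : KL X nu (tilt nu x b) = (binKL (nu x) b)%:E.
Proof.
rewrite /KL asboolT; last by move=> z _; exact: tilt_eq0.
rewrite (esum_seq_support X S _ S_uniq S_X); first last.
- by move=> z _ zS; rewrite tilt_notin // mulr0.
- by move=> z _; rewrite mulr_ge0 ?tilt_ge0 // fKL_ge0 // divr_ge0 ?tilt_ge0.
congr (_%:E).
transitivity (\sum_(z <- S) (nu z * ln (nu z / tilt nu x b z) - nu z + tilt nu x b z)).
  apply: eq_big_seq => z zS; have [h|h] := eqVneq (tilt nu x b z) 0; last by rewrite fKL_divrM.
  by rewrite h mulr0 (tilt_eq0 z h) mul0r subrr addr0.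
rewrite !big_split /= sumrN sum_tilt nu_sum subrK (bigD1_seq x) //= /tilt eqxx.
rewrite (eq_bigr (fun z => nu z * ln ((1 - nu x) / (1 - b)))).
  by rewrite -big_distrl /= sum_neq_x.
move=> z /negbTE ->; have [->|nz0] := eqVneq (nu z) 0; first by rewrite !mul0r.
by rewrite invfM mulrA mulfV // mul1r invf_div.
Qed.

End Tilt.

Lemma sum_count_mem (T : eqType) (S s : seq T) : uniq S -> {subset s <= S} ->
  (\sum_(z <- S) count_mem z s = size s)%N.
Proof.
move=> uS; elim: s => [|y s IH] sS /=; first by rewrite big1.
rewrite big_split /= IH; last by move=> z zs; apply: sS; rewrite inE zs orbT.
rewrite addnC -addn1; congr (_ + _)%N.
rewrite (bigD1_seq y) //= ?eqxx; last by apply: sS; rewrite inE eqxx.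
by rewrite big1 ?addn0 // => z /negbTE; rewrite eq_sym => ->.
Qed.

Section Empirical.
Context {R : realType} {m : nat}.
Local Notation V := 'rV[R]_m.
Implicit Types (s : seq V) (x z : V).

Lemma empirical_ge0 s z : 0 <= empirical s z.
Proof. by rewrite /empirical divr_ge0. Qed.

Lemma empirical_le1 s z : empirical s z <= 1.
Proof.
rewrite /empirical; have [->|s0] := eqVneq (size s) 0%N; first by rewrite invr0 mulr0.
by rewrite ler_pdivrMr ?ltr0n ?lt0n // mul1r ler_nat count_size.
Qed.

Lemma empirical_notin s z : z \notin s -> empirical s z = 0.
Proof. by move/count_memPn => e; rewrite /empirical e mul0r. Qed.

Lemma sum_empirical s (S : seq V) : (0 < size s)%N -> uniq S -> {subset s <= S} ->
  \sum_(z <- S) empirical s z = 1.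
Proof.
move=> s0 uS sS; rewrite /empirical -big_distrl /= -natr_sum sum_count_mem //.
by rewrite mulfV // pnatr_eq0 -lt0n.
Qed.

Lemma tilt_empirical_KLball (X : set V) s x b eps :
  (0 < size s)%N -> (forall y, y \in s -> X y) -> X x ->
  empirical s x <= b -> b <= 1 -> (b = 1 -> empirical s x = 1) ->
  binKL (empirical s x) b <= eps -> KLball X (empirical s) eps (tilt (empirical s) x b).
Proof.
move=> s0 sX Xx ab b1 hb1 hKL; pose S := undup (x :: s).
have uS : uniq S := undup_uniq _.
have SX z : z \in S -> X z by rewrite mem_undup inE => /predU1P[->|/sX].
have xS : x \in S by rewrite mem_undup inE eqxx.
have sS : {subset s <= S} by move=> z zs; rewrite mem_undup inE zs orbT.
have supp z : z \notin S -> empirical s z = 0.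
  by move=> zS; apply: empirical_notin; apply: contra zS; exact: sS.
have sum1 := sum_empirical s S s0 uS sS.
split; first exact: (tilt_pmf uS SX xS (empirical_ge0 s) supp sum1 ab b1).
by rewrite (KL_tilt uS SX xS (empirical_ge0 s) supp sum1 ab b1 hb1) lee_fin.
Qed.

(* The [t == 1] case is separate because [binKL a 1] is a junk finite value ([ln 0 = 0]). *)
Definition deviant (N : nat) (t eps : R) (k : nat) : bool :=
  let a := k%:R / N%:R in (a < t) && ((t == 1) || (eps < binKL a t)).

Lemma le_ereal_sup_KLball (X : set V) (s : seq V) (x : V) (t eps : R) :
  (0 < size s)%N -> (forall y, y \in s -> X y) -> X x -> t <= 1 -> 0 <= eps ->
  ~~ deviant (size s) t eps (count_mem x s) ->
  (t%:E <= ereal_sup [set (nu x)%:E | nu in KLball X (empirical s) eps])%E.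
Proof.
move=> s0 sX Xx t1 eps0 ndev.
pose a := empirical s x; have tilt_x b : tilt (empirical s) x b x = b by rewrite /tilt eqxx.
suff [b tb ball] : exists2 b, t <= b & KLball X (empirical s) eps (tilt (empirical s) x b).
  apply: (@le_trans _ _ (tilt (empirical s) x b x)%:E); first by rewrite tilt_x lee_fin.
  by apply: ereal_sup_ubound; exists (tilt (empirical s) x b).
have [t_le_a|a_lt_t] := leP t a.
  exists a => //; apply: tilt_empirical_KLball => //; first exact: empirical_le1.
  by rewrite binKLxx.
move: ndev; rewrite /deviant -/(empirical s x) -/a a_lt_t /= negb_or => /andP[t_neq1].
rewrite -leNgt => hKL; exists t => //; apply: tilt_empirical_KLball => //; first exact: ltW.
by move=> t_eq1; rewrite t_eq1 eqxx in t_neq1.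
Qed.

End Empirical.

Section Objective.
Context {R : realType}.
Local Open Scope ereal_scope.

Lemma lne_homo : {homo @lne R : a b / a <= b}.
Proof.
move=> a b ab; have [a0|a0] := leP a 0; first by rewrite le0_lneNy // leNye.
by rewrite lee_lne // in_itv /= leey andbT ltW // (lt_le_trans a0).
Qed.

Lemma le_objective {C : nat} (pi : 'I_C -> R) {L L' : 'I_C -> \bar R} {q : 'I_C -> R} :
  (forall i, (0 <= q i)%R) -> (forall i, L i <= L' i) ->
  objective pi L' q <= objective pi L q.
Proof.
move=> q0 LL'; apply: leeB => //; apply: lee_sum => i _.
by apply: lee_wpmul2l; [rewrite lee_fin | exact: lne_homo].
Qed.

End Objective.

Section Event.
Context {R : realType} {m : nat}.
Local Notation V := 'rV[R]_m.
Variables (X : set V) (C : nat) (Q : set ('I_C -> R)) (pi : 'I_C -> R).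
Variables (p : 'I_C -> V -> R) (x : V) (eps : 'I_C -> R).
Hypothesis Q_ge0 : forall q, Q q -> forall i, 0 <= q i.

Lemma Jhat_le_Jtrue (s : {ffun 'I_C -> seq V}) :
  (forall i, (p i x)%:E <=
     ereal_sup [set (nu x)%:E | nu in KLball X (empirical (s i)) (eps i)])%E ->
  (Jhat X Q pi eps s x <= Jtrue Q pi p x)%E.
Proof.
move=> hsup; apply/ereal_infP => _ [q Qq <-].
apply: (le_trans _ (le_objective pi (Q_ge0 q Qq) hsup)).
by apply: ereal_inf_lbound; exists q.
Qed.

Lemma Jtrue_lt_Jhat_deviant (N : 'I_C -> nat) (s : {ffun 'I_C -> seq V}) :
  X x -> (forall i, p i x <= 1) -> (forall i, 0 <= eps i) -> (forall i, (0 < N i)%N) ->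
  samples X N s -> (Jtrue Q pi p x < Jhat X Q pi eps s x)%E ->
  exists i, deviant (N i) (p i x) (eps i) (count_mem x (s i)).
Proof.
move=> Xx px1 eps0 N0 hs; rewrite ltNge => /negP hJ; apply: contrapT => nodev.
apply: hJ; apply: Jhat_le_Jtrue => i; have [si sX] := hs i.
apply: le_ereal_sup_KLball; rewrite ?si //.
by apply/negP => dev; apply: nodev; exists i.
Qed.

End Event.

Section SumProdSeq.
Context {R : realType} {T : eqType} {C : nat}.
Context {N : 'I_C -> nat} {S : seq T} {y0 : T}.
Hypothesis y0S : y0 \in S.

Let M := (\max_(j < C) N j)%N.
Let N_le_M j : (N j <= M)%N. Proof. exact: leq_bigmax. Qed.
Let size_S_gt0 : (0 < size S)%N.
Proof. by move: y0S; rewrite -index_mem; apply: leq_ltn_trans. Qed.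
Let t0 : 'I_(size S) := Ordinal size_S_gt0.
Let cell (jk : 'I_C * 'I_M) := (jk.2 < N jk.1)%N.
Let fits (s : {ffun 'I_C -> seq T}) := forall j, size (s j) = N j /\ {subset s j <= S}.

(* Cell (j, k), k < N j, is sent to the position in S of the k-th entry of s j.  Encoding
   is injective on families of the right shape, so a sum over such families is bounded by
   the sum over all functions from cells to positions, which factorizes. *)
Let encode (s : {ffun 'I_C -> seq T}) : {ffun 'I_C * 'I_M -> 'I_(size S)} :=
  [ffun jk => if cell jk then insubd t0 (index (nth y0 (s jk.1) jk.2) S) else t0].

Let encodeK s j (k : 'I_M) : fits s -> (k < N j)%N ->
  nth y0 S (encode s (j, k)) = nth y0 (s j) k.
Proof.
move=> fs kN; have [sj sS] := fs j.
have yS : nth y0 (s j) k \in S by apply: sS; rewrite mem_nth // sj.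
by rewrite ffunE /cell /= kN val_insubd index_mem yS nth_index.
Qed.

Let encode_inj s t : fits s -> fits t -> encode s = encode t -> s = t.
Proof.
move=> fs ft est; apply/ffunP => j; apply: (@eq_from_nth _ y0).
  by rewrite (fs j).1 (ft j).1.
move=> k; rewrite (fs j).1 => kN; have kM : (k < M)%N := leq_trans kN (N_le_M j).
by rewrite -[k]/(nat_of_ord (Ordinal kM)) -!encodeK // est.
Qed.

Let codes := pfamily t0 cell (fun _ => predT).

Let encode_codes s : encode s \in codes.
Proof.
apply/pfamilyP; split => //; apply/fintype.subsetP => jk.
by rewrite !inE ffunE; case: ifP => // _; rewrite eqxx.
Qed.

Let prod_widen j (F : nat -> R) : \prod_(k < N j) F k = \prod_(k < M | cell (j, k)) F k.
Proof. exact: (big_ord_widen M F (N_le_M j)). Qed.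

Context {g : 'I_C -> T -> R}.
Hypothesis g_ge0 : forall j y, 0 <= g j y.

Let weight (f : {ffun 'I_C * 'I_M -> 'I_(size S)}) :=
  \prod_(jk | cell jk) g jk.1 (nth y0 S (f jk)).

Let prod_encode s : fits s -> \prod_(j < C) \prod_(y <- s j) g j y = weight (encode s).
Proof.
move=> fs.
transitivity (\prod_(j < C) \prod_(k < M | cell (j, k)) g j (nth y0 S (encode s (j, k)))).
  apply: eq_bigr => j _; rewrite (big_nth y0) big_mkord (fs j).1.
  rewrite (prod_widen j (fun k => g j (nth y0 (s j) k))).
  by apply: eq_bigr => k kN; rewrite encodeK.
by rewrite pair_big_dep; apply: eq_big => [[j k]|[j k]].
Qed.

Let sum_weight_codes :
  \sum_(f in codes) weight f = \prod_(j < C) (\sum_(y <- S) g j y) ^+ N j.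
Proof.
rewrite /weight -(big_distr_big_dep t0 cell (fun _ => predT) (fun jk t => g jk.1 (nth y0 S t))).
transitivity (\prod_(j < C) \prod_(k < M | cell (j, k)) \sum_(t < size S) g j (nth y0 S t)).
  by rewrite pair_big_dep; apply: eq_big => [[j k]|[j k]].
apply: eq_bigr => j _; rewrite -(prod_widen j (fun=> \sum_(t < size S) g j (nth y0 S t))).
by rewrite prodr_const card_ord (big_nth y0) big_mkord.
Qed.

Lemma sum_prod_seq_le (F : seq {ffun 'I_C -> seq T}) :
  uniq F -> (forall s, s \in F -> forall j, size (s j) = N j /\ {subset s j <= S}) ->
  \sum_(s <- F) \prod_(j < C) \prod_(y <- s j) g j y <=
  \prod_(j < C) (\sum_(y <- S) g j y) ^+ N j.
Proof.
move=> uF fF; rewrite (eq_big_seq _ (fun s sF => prod_encode s (fF s sF))).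
rewrite -(big_map encode predT weight) big_uniq /=; last first.
  by rewrite map_inj_in_uniq // => s t sF tF; apply: encode_inj; apply: fF.
have encodeF f : (f \in codes) && (f \in map encode F) = (f \in map encode F).
  by apply/andb_idl => /mapP[s _ ->]; exact: encode_codes.
rewrite -(eq_bigl _ _ encodeF) -sum_weight_codes [X in _ <= X](bigID (mem (map encode F))) /=.
by rewrite lerDl sumr_ge0 // => f _; exact: prodr_ge0.
Qed.

End SumProdSeq.

Section Chernoff.
Context {R : realType}.
Implicit Types (t w Q : R).

Lemma exprn_expR t n : 0 < t -> t ^+ n = expR (n%:R * ln t).
Proof. by move=> t0; rewrite expRM_natl lnK // posrE. Qed.

Lemma le0_of_mgf_expr (N k : nat) Q : (k < N)%N ->
  (forall w, 0 <= w -> w ^+ k * Q <= w ^+ N) -> Q <= 0.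
Proof.
move=> kN hw; rewrite leNgt; apply/negP => Q0.
have Q1 : 0 < Q + 1 by rewrite addr_gt0.
pose w := Q / (Q + 1).
have w0 : 0 < w by rewrite divr_gt0.
have w1 : w <= 1 by rewrite ler_pdivrMr // mul1r lerDl.
have wQ : w < Q by rewrite ltr_pdivrMr // mulrDr mulr1 ltrDr mulr_gt0.
have := hw w (ltW w0); rewrite -(subnKC (ltnW kN)) exprD ler_pM2l ?exprn_gt0 //.
have -> : (N - k = (N - k).-1.+1)%N by rewrite prednK // subn_gt0.
rewrite exprSr => h; have : w ^+ (N - k).-1 * w <= w.
  by apply: ler_piMl; [exact: ltW | rewrite exprn_ile1 // ltW].
by move/(le_trans h); rewrite leNgt wQ.
Qed.

Lemma le_expR_binKL (N k : nat) t Q : (0 < N)%N -> k%:R / N%:R < t -> t < 1 ->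
  (forall w, 0 <= w -> w ^+ k * Q <= (1 - t + w * t) ^+ N) ->
  Q <= expR (- (N%:R * binKL (k%:R / N%:R) t)).
Proof.
move=> N0; set a := k%:R / N%:R => a_lt_t t_lt1 hw.
have Nr : 0 < N%:R :> R by rewrite ltr0n.
have a0 : 0 <= a by rewrite divr_ge0.
have t0 : 0 < t by exact: le_lt_trans a_lt_t.
have ut : 0 < 1 - t by rewrite subr_gt0.
have [k0|k_gt0] := eqVneq k 0%N.
  have := hw 0 (lexx _); rewrite k0 expr0 mul1r mul0r addr0 => h.
  apply: le_trans h _; rewrite exprn_expR // ler_expR /binKL /a k0.
  by rewrite !mul0r add0r subr0 mul1r div1r lnV ?posrE // mulrN opprK.
have a_gt0 : 0 < a by rewrite divr_gt0 // ltr0n lt0n.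
have ua : 0 < 1 - a by rewrite subr_gt0 (lt_trans a_lt_t).
(* This [w] minimizes [(1 - t + w * t) ^+ N / w ^+ k]. *)
pose u := (1 - t) / (1 - a); pose w := a / t * u.
have u0 : 0 < u by rewrite divr_gt0.
have w0 : 0 < w by rewrite mulr_gt0 // divr_gt0.
have mgf_w : 1 - t + w * t = u by rewrite /w /u; field; rewrite !gt_eqF.
have := hw w (ltW w0); rewrite mgf_w !exprn_expR // -ler_pdivlMl ?expR_gt0 //.
rewrite -expRN -expRD => /le_trans; apply; rewrite ler_expR.
have ka : k%:R = N%:R * a :> R by rewrite /a mulrC divfK // gt_eqF.
have lw : ln w = ln (a / t) + ln u by rewrite lnM ?posrE // divr_gt0.
have lu : ln ((1 - a) / (1 - t)) = - ln u by rewrite -invf_div lnV ?posrE.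
by rewrite /binKL lu lw ka; lra.
Qed.

Lemma deviant_le_expR (N k : nat) t eps Q : (0 < N)%N -> t <= 1 ->
  deviant N t eps k -> (forall w, 0 <= w -> w ^+ k * Q <= (1 - t + w * t) ^+ N) ->
  Q <= expR (- (N%:R * eps)).
Proof.
move=> N0 t1 /andP[a_lt_t dev] hw; have [t_eq1|t_neq1] := eqVneq t 1.
  apply: (le_trans _ (ltW (expR_gt0 _))); apply: (le0_of_mgf_expr N k).
    by move: a_lt_t; rewrite t_eq1 ltr_pdivrMr ?ltr0n // mul1r ltr_nat.
  by move=> w w0; move: (hw w w0); rewrite t_eq1 subrr add0r mulr1.
move: dev; rewrite (negbTE t_neq1) /= => eps_lt.
have t_lt1 : t < 1 by rewrite lt_neqAle t_neq1.
apply: (le_trans (le_expR_binKL N k t Q N0 a_lt_t t_lt1 hw)).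
by rewrite ler_expR lerN2 ler_wpM2l // ltW.
Qed.

End Chernoff.

Lemma prod_seq_if_eq (R : pzSemiRingType) (T : eqType) (s : seq T) (x : T) (w : R) :
  \prod_(y <- s) (if y == x then w else 1) = w ^+ count_mem x s.
Proof.
elim: s => [|y s IH]; first by rewrite big_nil expr0.
by rewrite big_cons IH /= exprD; case: (y == x); rewrite ?expr1 ?expr0 ?mul1r.
Qed.

Definition sample_weight {R : realType} {m C : nat} (p : 'I_C -> 'rV[R]_m -> R)
  (s : {ffun 'I_C -> seq 'rV[R]_m}) : R :=
  \prod_(j < C) \prod_(y <- s j) p j y.

Section Sampling.
Context {R : realType} {m : nat}.
Local Notation V := 'rV[R]_m.
Context {X : set V} {C : nat} {p : 'I_C -> V -> R} {x : V} {N : 'I_C -> nat}.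
Hypotheses (p_pmf : forall i, is_pmf X (p i)) (Xx : X x).

Lemma sample_weight_ge0 s : 0 <= sample_weight p s.
Proof. by apply: prodr_ge0 => j _; apply: prodr_ge0 => y _; case: (p_pmf j). Qed.

Lemma samples_support (F : seq {ffun 'I_C -> seq V}) :
  (forall s, s \in F -> samples X N s) ->
  exists S, [/\ uniq S, x \in S, forall z, z \in S -> X z &
    forall s, s \in F -> forall j, {subset s j <= S}].
Proof.
move=> FX; pose entries (s : {ffun 'I_C -> seq V}) := flatten [seq s j | j <- enum 'I_C].
exists (undup (x :: flatten [seq entries s | s <- F])).
split; [exact: undup_uniq | by rewrite mem_undup mem_head | |].
  move=> z; rewrite mem_undup inE => /predU1P[-> //|/flattenP[_ /mapP[s sF ->]]].
  by move=> /flattenP[_ /mapP[j _ ->]]; apply: (FX s sF j).2.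
move=> s sF j z zs; rewrite mem_undup inE; apply/orP; right.
apply/flattenP; exists (entries s); first by apply/mapP; exists s.
by apply/flattenP; exists (s j) => //; apply/mapP; exists j; rewrite ?mem_enum.
Qed.

Lemma sum_sample_weight_mgf_le (F : seq {ffun 'I_C -> seq V}) i w :
  uniq F -> (forall s, s \in F -> samples X N s) -> 0 <= w ->
  \sum_(s <- F) sample_weight p s * w ^+ count_mem x (s i) <= (1 - p i x + w * p i x) ^+ N i.
Proof.
move=> uF FX w0; have [S [uS xS SX FS]] := samples_support F FX.
have FS' s : s \in F -> forall j, size (s j) = N j /\ {subset s j <= S}.
  by move=> sF j; split; [exact: (FX s sF j).1 | exact: FS].
pose g j y := p j y * (if (j == i) && (y == x) then w else 1).
have g_ge0 j y : 0 <= g j y by rewrite mulr_ge0 //; [case: (p_pmf j) | case: ifP].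
have prod_g (s : {ffun 'I_C -> seq V}) :
    \prod_(j < C) \prod_(y <- s j) g j y = sample_weight p s * w ^+ count_mem x (s i).
  under eq_bigr => j _ do rewrite big_split /=.
  rewrite big_split /=; congr (_ * _); rewrite (bigD1 i) //= [X in _ * X]big1 ?mulr1.
    by under eq_bigr => y _ do rewrite eqxx andTb; rewrite prod_seq_if_eq.
  by move=> j /negbTE ji; apply: big1 => y _; rewrite ji.
have sum_g_i : \sum_(y <- S) g i y <= 1 - p i x + w * p i x.
  rewrite (bigD1_seq x) //= /g !eqxx /= (eq_bigr (p i)) => [|y /negbTE ->]; last by rewrite mulr1.
  by move: (pmf_sum_le1 (p_pmf i) S uS SX); rewrite (bigD1_seq x) //=; lra.
have sum_g_j j : j != i -> \sum_(y <- S) g j y <= 1.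
  move=> /negbTE ji; rewrite (eq_bigr (p j)) => [|y _]; last by rewrite /g ji mulr1.
  exact: pmf_sum_le1 (p_pmf j) S uS SX.
rewrite -(eq_bigr _ (fun s _ => prod_g s)).
apply: (le_trans (sum_prod_seq_le xS g_ge0 F uF FS')).
rewrite (bigD1 i) //= -[X in _ <= X]mulr1; apply: ler_pM.
- by rewrite exprn_ge0 // sumr_ge0.
- by apply: prodr_ge0 => j _; rewrite exprn_ge0 // sumr_ge0.
- by apply: lerXn2r; rewrite ?nnegrE ?sumr_ge0 // (le_trans _ sum_g_i) ?sumr_ge0.
- apply: prodr_ile1 => j ji; rewrite exprn_ge0 ?sumr_ge0 //=.
  by rewrite exprn_ile1 ?sumr_ge0 ?sum_g_j.
Qed.

Lemma sum_sample_weight_deviant_le (F : seq {ffun 'I_C -> seq V}) i k eps :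
  uniq F -> (forall s, s \in F -> samples X N s) -> (0 < N i)%N ->
  deviant (N i) (p i x) eps k ->
  \sum_(s <- F | count_mem x (s i) == k) sample_weight p s <= expR (- ((N i)%:R * eps)).
Proof.
move=> uF FX N0 dev; apply: deviant_le_expR dev _ => //; first exact: pmf_le1.
move=> w w0; apply: (le_trans _ (sum_sample_weight_mgf_le F i w uF FX w0)).
rewrite mulr_sumr big_mkcond /=; apply: ler_sum => s _.
case: eqP => [<-|_]; first by rewrite mulrC.
by rewrite mulr_ge0 ?sample_weight_ge0 ?exprn_ge0.
Qed.

End Sampling.

Section SampleProb.
Context {R : realType} {m : nat}.
Local Notation V := 'rV[R]_m.
Context {X : set V} {C : nat} {p : 'I_C -> V -> R} {x : V} {N : 'I_C -> nat}.
Variable eps : 'I_C -> R.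
Hypotheses (p_pmf : forall i, is_pmf X (p i)) (Xx : X x) (N_gt0 : forall i, (0 < N i)%N).

Let dev i k := deviant (N i) (p i x) (eps i) k.
Let if_count i k (s : {ffun 'I_C -> seq V}) := if count_mem x (s i) == k then sample_weight p s else 0.

Lemma sample_weight_le_deviant s :
  samples X N s -> (exists i, dev i (count_mem x (s i))) ->
  sample_weight p s <= \sum_(i < C) \sum_(k < (N i).+1 | dev i k) if_count i k s.
Proof.
move=> hs [i dev_i]; have ki : (count_mem x (s i) < (N i).+1)%N.
  by rewrite ltnS -(hs i).1 count_size.
have term_ge0 j (k : 'I_(N j).+1) : 0 <= if_count j k s.
  by rewrite /if_count; case: ifP => // _; exact: sample_weight_ge0.
rewrite (bigD1 i) //= (bigD1 (Ordinal ki)) //= /if_count eqxx -addrA lerDl.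
rewrite addr_ge0 // sumr_ge0 // => [k _ | j _]; first exact: term_ge0.
by apply: sumr_ge0 => k _; exact: term_ge0.
Qed.

Lemma sample_prob_deviant_le (E : set {ffun 'I_C -> seq V}) :
  (forall s, samples X N s -> E s -> exists i, dev i (count_mem x (s i))) ->
  (sample_prob X p N E <= (\sum_(i < C) (N i).+1%:R * expR (- ((N i)%:R * eps i)))%:E)%E.
Proof.
move=> Edev; apply: esum_le_seq => F uF FE.
have FX s : s \in F -> samples X N s by move=> /FE[].
apply: (@le_trans _ _ (\sum_(s <- F) \sum_(i < C) \sum_(k < (N i).+1 | dev i k) if_count i k s)).
  rewrite big_seq [X in _ <= X]big_seq; apply: ler_sum => s sF.
  by have [hs hE] := FE s sF; exact: sample_weight_le_deviant hs (Edev s hs hE).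
rewrite exchange_big /=; apply: ler_sum => i _; rewrite exchange_big /=.
apply: (@le_trans _ _ (\sum_(k < (N i).+1) expR (- ((N i)%:R * eps i)))); last first.
  by rewrite sumr_const card_ord [X in _ <= X]mulr_natl.
rewrite [X in _ <= X](bigID (fun k : 'I_(N i).+1 => dev i k)) /= -[X in X <= _]addr0.
apply: lerD; last by rewrite sumr_ge0 // => k _; exact/ltW/expR_gt0.
apply: ler_sum => k dev_k; rewrite -big_mkcond /=.
exact: sum_sample_weight_deviant_le.
Qed.

End SampleProb.

Section Rate.
Context {R : realType}.

Lemma lerS_expR (r d : R) : 0 <= r -> 0 < d -> r + 1 <= (1 + d^-1) * expR (r * d).
Proof.
move=> r0 d0; have rd0 : 0 <= r * d by rewrite mulr_ge0 // ltW.
apply: le_trans (ler_wpM2l _ (expR_ge1Dx (r * d))); last by rewrite addr_ge0 ?invr_ge0 ?ltW.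
have -> : (1 + d^-1) * (1 + r * d) = 1 + r * d + d^-1 + r.
  by rewrite mulrDl mul1r mulrDr mulr1 mulrCA mulVf ?gt_eqF // mulr1 addrA.
have : 0 <= d^-1 by rewrite invr_ge0 ltW.
lra.
Qed.

Lemma sum_expR_rate {C : nat} {eps : 'I_C -> R} {e delta : R} :
  (0 < C)%N -> 0 < e -> 0 < delta -> (forall i, e <= eps i) ->
  exists n0 : nat, forall (n : nat) (N : 'I_C -> nat), (n0 <= n)%N -> (forall i, n <= N i)%N ->
    \sum_(i < C) (N i).+1%:R * expR (- ((N i)%:R * eps i)) <= expR (n%:R * (delta - e)).
Proof.
move=> C0 e0 delta0 e_le; pose d := Num.min delta e / 2.
have d0 : 0 < d by rewrite divr_gt0 // lt_min delta0 e0.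
have d_le_delta : d <= delta / 2 by rewrite ler_pM2r // ge_min lexx.
have d_le_e : d <= e / 2 by rewrite ler_pM2r // ge_min lexx orbT.
pose K := C%:R * (1 + d^-1).
have K1 : 1 <= K.
  by rewrite -[1]mul1r ler_pM // ?ler1n // lerDl invr_ge0 ltW.
exists (Num.truncn (ln K / d)).+1 => n N n0_le n_le.
have n_large : ln K <= n%:R * d.
  rewrite -ler_pdivrMr //; apply: ltW (lt_le_trans (truncnS_gt _) _); by rewrite ler_nat.
have d_inv_gt0 : 0 < 1 + d^-1 by rewrite addr_gt0 ?invr_gt0.
have term i : (N i).+1%:R * expR (- ((N i)%:R * eps i)) <= (1 + d^-1) * expR (- (n%:R * (e - d))).
  have Nn : n%:R <= (N i)%:R :> R by rewrite ler_nat.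
  have h1 := lerS_expR ((N i)%:R) d (ler0n R (N i)) d0.
  have h2 : expR (- ((N i)%:R * eps i)) <= expR (- ((N i)%:R * e)).
    by rewrite ler_expR lerN2 ler_wpM2l.
  rewrite -natr1; apply: le_trans (ler_pM (addr_ge0 (ler0n _ _) ler01) (ltW (expR_gt0 _)) h1 h2) _.
  rewrite -mulrA -expRD ler_pM2l // ler_expR.
  have : 0 <= e - d by lra.
  nra.
apply: le_trans (ler_sum _ (fun i _ => term i)) _.
rewrite sumr_const card_ord -[_ *+ C]mulr_natl mulrA -/K -[K]lnK ?posrE ?(lt_le_trans ltr01 K1) //.
have : n%:R * d <= n%:R * (delta / 2) by rewrite ler_wpM2l.
by rewrite -expRD ler_expR; lra.
Qed.

Lemma lne_le_rate (n : nat) (P : \bar R) (r : R) : (0 < n)%N ->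
  (P <= (expR (n%:R * r))%:E)%E -> ((n%:R^-1)%:E * lne P <= r%:E)%E.
Proof.
move=> n0 /lne_homo; rewrite lne_EFin ?expR_gt0 // expRK => hP.
apply: le_trans (lee_wpmul2l _ hP) _; first by rewrite lee_fin invr_ge0.
by rewrite -EFinM mulrA mulVf ?mul1r // pnatr_eq0 -lt0n.
Qed.

End Rate.

Lemma nmin_le {C : nat} (N : 'I_C -> nat) i : (nmin N <= N i)%N.
Proof. by rewrite /nmin -minEnat; exact: (@bigmin_le _ nat _ _ i N). Qed.

Lemma nmin_ge {C : nat} {N : 'I_C -> nat} {n0 : nat} (i0 : 'I_C) :
  (forall i, n0 <= N i)%N -> (n0 <= nmin N)%N.
Proof.
move=> h; rewrite /nmin -minEnat; apply: (@le_bigmin _ nat) => //.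
exact: leq_trans (h i0) (leq_bigmax i0).
Qed.

Lemma bigmine_EFin {R : realType} {C : nat} {f : 'I_C -> R} : (0 < C)%N -> (forall i, 0 < f i) ->
  exists e, [/\ (\big[mine/+oo]_(i < C) (f i)%:E)%E = e%:E, 0 < e & forall i, e <= f i].
Proof.
move=> C0 f0; have [i _ Ei] :=
  eq_bigmin (Ordinal C0) xpredT (fun i => (f i)%:E) isT (fun i _ => leey _).
by exists (f i); split => // j; rewrite -lee_fin -Ei; exact: bigmin_le.
Qed.

Theorem mainTheorem8 (R : realType) (m : nat) (X : set 'rV[R]_m)
  (C : nat) (p : 'I_C -> 'rV[R]_m -> R) (pi : 'I_C -> R)
  (Q : set ('I_C -> R)) (x : 'rV[R]_m) (eps : 'I_C -> R) :
  countable X ->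
  (2 <= C)%N ->
  (forall i, is_pmf X (p i)) ->
  (forall i, 0 <= pi i) -> \sum_(i < C) pi i = 1 ->
  (forall q, Q q -> (forall i, 0 <= q i) /\ \sum_(i < C) q i = 1) ->
  X x ->
  (forall i, 0 < eps i) ->
  let epsmin : \bar R := (\big[mine/+oo%E]_(i < C) (eps i)%:E)%E in
  (forall delta : R, 0 < delta ->
    exists n0 : nat, forall N : 'I_C -> nat, (forall i, n0 <= N i)%N ->
      (((nmin N)%:R^-1)%:E *
        lne (sample_prob X p N
               [set s | (Jtrue Q pi p x < Jhat X Q pi eps s x)%E])
       <= - epsmin + delta%:E)%E)
  /\ (- epsmin < 0)%E.
Proof.
(* Neither the countability of X nor the prior enters the bound. *)
move=> _ C2 p_pmf _ _ hQ Xx eps_gt0 epsmin.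
have C0 : (0 < C)%N by apply: leq_trans C2.
have [e [epsminE e_gt0 e_le]] := bigmine_EFin C0 eps_gt0.
rewrite /epsmin epsminE -EFinN; split=> [delta delta_gt0|]; last by rewrite lte_fin oppr_lt0.
have [n0 rate] := sum_expR_rate C0 e_gt0 delta_gt0 e_le.
exists n0.+1 => N N_ge; rewrite -EFinD addrC.
have n_ge : (n0.+1 <= nmin N)%N := nmin_ge (Ordinal C0) N_ge.
have N_gt0 i : (0 < N i)%N by apply: leq_trans (nmin_le N i); apply: leq_trans n_ge.
have event_deviant s : samples X N s -> (Jtrue Q pi p x < Jhat X Q pi eps s x)%E ->
    exists i, deviant (N i) (p i x) (eps i) (count_mem x (s i)).
  apply: Jtrue_lt_Jhat_deviant => // [q /hQ[] // | i | i]; last exact: ltW.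
  exact: pmf_le1 (p_pmf i) x Xx.
apply: lne_le_rate; first exact: leq_trans n_ge.
apply: (le_trans (sample_prob_deviant_le eps p_pmf Xx N_gt0 _ event_deviant)).
by rewrite lee_fin; apply: rate; [exact: ltnW | exact: nmin_le].
Qed.
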